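(* For integers $1\le q\le p<n$ define $$K_n=\Big(\frac2n\Big)^{pq/2}\prod_{j=0}^{q-1}\frac{\Gamma((n-j)/2)}{\Gamma((n-p-j)/2)}.$$ If $p=p_n\to\infty$, $\limsup_{n\to\infty}p/n<1$ and $pq=O(n)$, then as $n\to\infty$ $$\log K_n=-\frac{pq}{2}+\frac{q(q+1)}{4}\log\Big(1+\frac{p}{n-p}\Big)-\frac{pq^3}{12n^2}-c_nq\log\Big(1-\frac pn\Big)+o(1),$$ where $c_n=\frac12(n-p-q-1)$. *)

From Stdlib Require Import Reals.
From Coquelicot Require Import Coquelicot.
Open Scope R_scope.

Definition Gamma (x : R) : R :=
  RInt_gen (fun t => Rpower t (x - 1) * exp (- t)) (at_right 0) (Rbar_locally p_infty).

Fixpoint prodR (f : nat -> R) (m : nat) : R :=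
  match m with
  | O => 1
  | S m' => prodR f m' * f m'
  end.

Definition K (n p q : nat) : R :=
  Rpower (2 / INR n) (INR p * INR q / 2) *
  prodR (fun j => Gamma ((INR n - INR j) / 2) / Gamma ((INR n - INR p - INR j) / 2)) q.

Definition c_ (n p q : nat) : R := (INR n - INR p - INR q - 1) / 2.

Definition K_approx (n p q : nat) : R :=
  - (INR p * INR q) / 2
  + INR q * (INR q + 1) / 4 * ln (1 + INR p / (INR n - INR p))
  - INR p * INR q ^ 3 / (12 * INR n ^ 2)
  - c_ n p q * INR q * ln (1 - INR p / INR n).

(* With [y_j = (n - p - j) / 2], [ln K_n] is the sum over [j < q] of
   [p/2 ln (2/n) + ln Gamma (y_j + p/2) - ln Gamma y_j], and the expansion is the telescoping sum
   of [A (j + 1) - A j], where [A Q] is the expansion with [q] replaced by [Q]. Each pair of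
   summands agrees up to [O(1/n)]:
   - [ln Gamma (y + p/2) - ln Gamma y = S (y + p/2) - S y + O(1/y)] with
     [S t = (t - 1/2) ln t - t], by [Gamma (t + 1) = t Gamma t], the trapezoid bound
     [0 <= (1 + 1/(2t)) ln (1 + 1/t) - 1/t <= 1/(12 t^2)] and, for odd [p], log-convexity;
   - what remains is exactly [psi n j / 2 - psi (n - p) j / 2 + p (3j^2 + 3j + 1) / (12 n^2)]
     with [psi M j = (M - j - 1) ln (1 - j/M)], and the third-order Taylor expansion of [psi]
     makes it [O(1/n)] because [j < q], [q^2 <= p q = O(n)] and [n - p >= d n] for some [d > 0].
   The total error is thus [O(q/n) = O(n^(-1/2))]. *)

From Stdlib Require Import Reals Lra Lia Psatz Classical.
From Coquelicot Require Import Coquelicot.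
Open Scope R_scope.

Lemma le_of_derive_nonneg (h dh : R -> R) (X : R) :
  (forall x, 0 <= x <= X -> is_derive h x (dh x)) ->
  (forall x, 0 <= x <= X -> 0 <= dh x) ->
  forall x, 0 <= x <= X -> h 0 <= h x.
Proof.
  intros Hd Hpos x Hx.
  destruct (Req_dec x 0) as [->|Hx0]; [lra|].
  destruct (MVT_gen h 0 x dh) as [c [Hc Heq]];
    rewrite ?Rmin_left, ?Rmax_right in * by lra.
  - intros z Hz. apply Hd. lra.
  - intros z Hz. apply continuity_pt_filterlim.
    apply (ex_derive_continuous (K := R_AbsRing) (V := R_NormedModule)).
    eexists. apply Hd. lra.
  - assert (0 <= dh c) by (apply Hpos; lra). nra.
Qed.

Lemma derive_sandwich (f df g dg : R -> R) (X : R) :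
  f 0 = 0 -> g 0 = 0 ->
  (forall x, 0 <= x <= X -> is_derive f x (df x)) ->
  (forall x, 0 <= x <= X -> is_derive g x (dg x)) ->
  (forall x, 0 <= x <= X -> 0 <= df x <= dg x) ->
  forall x, 0 <= x <= X -> 0 <= f x <= g x.
Proof.
  intros Hf0 Hg0 Hf Hg Hle x Hx. split.
  - rewrite <- Hf0. apply (le_of_derive_nonneg f df X); auto.
    intros t Ht. apply Hle, Ht.
  - assert (H := le_of_derive_nonneg (fun t => g t - f t) (fun t => dg t - df t) X).
    cut (g 0 - f 0 <= g x - f x); [lra|].
    { apply H; auto.
      - intros t Ht. apply (is_derive_minus (K := R_AbsRing) (V := R_NormedModule)); auto.
      - intros t Ht. specialize (Hle t Ht). lra. }
Qed.

(* Leaves only the comparison [0 <= df t <= dg t] of the derivatives. *)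
Ltac derive_sandwich_goals :=
  [> cbv beta; rewrite ?Rminus_0_r, ?Rplus_0_r, ?ln_1; field
  | cbv beta; field
  | intros t Ht; auto_derive; try (unfold Rminus; field; lra); try lra; auto
  | intros t Ht; auto_derive; try (unfold Rminus; field; lra); try lra; auto
  | intros t Ht; cbv beta | lra ].

Lemma ln_1m_bound1 (u : R) : 0 <= u <= 1/2 -> 0 <= - ln (1 - u) - u <= u ^ 2.
Proof.
  intros Hu.
  apply (derive_sandwich (fun t => - ln (1 - t) - t) (fun t => t / (1 - t))
           (fun t => t ^ 2) (fun t => 2 * t) (1/2));
    derive_sandwich_goals.
  split; [apply Rdiv_le_0_compat | apply Rle_div_l]; nra.
Qed.

Lemma ln_1m_bound2 (u : R) :
  0 <= u <= 1/2 -> 0 <= - ln (1 - u) - u - u ^ 2 / 2 <= 2 * u ^ 3 / 3.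
Proof.
  intros Hu.
  apply (derive_sandwich (fun t => - ln (1 - t) - t - t ^ 2 / 2) (fun t => t ^ 2 / (1 - t))
           (fun t => 2 * t ^ 3 / 3) (fun t => 2 * t ^ 2) (1/2));
    derive_sandwich_goals.
  split; [apply Rdiv_le_0_compat | apply Rle_div_l]; nra.
Qed.

Lemma xln_1m_bound3 (u : R) :
  0 <= u <= 1/2 -> 0 <= (1 - u) * ln (1 - u) + u - u ^ 2 / 2 - u ^ 3 / 6 <= u ^ 4 / 6.
Proof.
  intros Hu.
  apply (derive_sandwich (fun t => (1 - t) * ln (1 - t) + t - t ^ 2 / 2 - t ^ 3 / 6)
           (fun t => - ln (1 - t) - t - t ^ 2 / 2) (fun t => t ^ 4 / 6)
           (fun t => 2 * t ^ 3 / 3) (1/2)); derive_sandwich_goals.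
  apply ln_1m_bound2; lra.
Qed.

Lemma ln_1p_bound1 (w : R) : 0 <= w -> 0 <= w - ln (1 + w) <= w ^ 2 / 2.
Proof.
  intros Hw.
  apply (derive_sandwich (fun t => t - ln (1 + t)) (fun t => t / (1 + t))
           (fun t => t ^ 2 / 2) (fun t => t) w);
    derive_sandwich_goals.
  split; [apply Rdiv_le_0_compat | apply Rle_div_l]; nra.
Qed.

Lemma ln_1p_trapezoid_deriv (w : R) :
  0 <= w -> 0 <= ln (1 + w) / 2 - (w / 2) / (1 + w) <= w ^ 2 / 4.
Proof.
  intros Hw.
  apply (derive_sandwich (fun t => ln (1 + t) / 2 - (t / 2) / (1 + t))
           (fun t => t / (2 * (1 + t) ^ 2)) (fun t => t ^ 2 / 4) (fun t => t / 2) w);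
    derive_sandwich_goals.
  split; [apply Rdiv_le_0_compat | apply Rle_div_l]; nra.
Qed.

(* The trapezoid rule for [int_1^(1+w) dt/t]. *)
Lemma ln_1p_trapezoid (w : R) :
  0 <= w -> 0 <= (1 + w / 2) * ln (1 + w) - w <= w ^ 3 / 12.
Proof.
  intros Hw.
  apply (derive_sandwich (fun t => (1 + t / 2) * ln (1 + t) - t)
           (fun t => ln (1 + t) / 2 - (t / 2) / (1 + t)) (fun t => t ^ 3 / 12)
           (fun t => t ^ 2 / 4) w); derive_sandwich_goals.
  apply ln_1p_trapezoid_deriv; lra.
Qed.

Lemma exp_le_exp (a b : R) : a <= b -> exp a <= exp b.
Proof. intros [h|h]; [left; apply exp_increasing; auto | right; subst; auto]. Qed.

Lemma ball_R (x e y : R) : ball x e y <-> Rabs (y - x) < e.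
Proof. reflexivity. Qed.

Lemma filter_prod_at_right_pinfty (a0 b0 : R) (P : R * R -> Prop) :
  0 < a0 -> (forall a b, 0 < a < a0 -> b0 < b -> P (a, b)) ->
  filter_prod (at_right 0) (Rbar_locally p_infty) P.
Proof.
  intros Ha0 HP. apply Filter_prod with (fun a => 0 < a < a0) (fun b => b0 < b); auto.
  - exists (mkposreal a0 Ha0). intros y Hy Hy0.
    rewrite ball_R in Hy. simpl in Hy. rewrite Rminus_0_r in Hy.
    apply Rabs_def2 in Hy. lra.
  - exists b0. auto.
Qed.

(* The improper integral is the supremum of the proper ones. *)
Lemma is_RInt_gen_nonneg_bounded (f : R -> R) (M : R) :
  (forall t, 0 < t -> 0 <= f t) ->
  (forall t, 0 < t -> continuous f t) ->
  (forall a b, 0 < a <= b -> RInt f a b <= M) ->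
  exists l, is_RInt_gen f (at_right 0) (Rbar_locally p_infty) l /\
            (forall a b, 0 < a <= b -> RInt f a b <= l).
Proof.
  intros Hpos Hcont Hbd.
  assert (Hex : forall a b, 0 < a <= b -> ex_RInt f a b).
  { intros a b Hab. apply (ex_RInt_continuous (V := R_CompleteNormedModule)).
    intros z Hz. rewrite Rmin_left in Hz by lra. apply Hcont. lra. }
  set (E := fun v => exists a b, 0 < a <= b /\ v = RInt f a b).
  destruct (completeness E) as [l [Hub Hlub]].
  { exists M. intros v [a [b [Hab ->]]]. auto. }
  { exists (RInt f 1 1), 1, 1. split; [lra | auto]. }
  exists l. split.
  2: { intros a b Hab. apply Hub. exists a, b. auto. }
  intros P [eps Heps].
  destruct (classic (exists v, E v /\ l - eps < v))
    as [[v [[a0 [b0 [Hab0 ->]]] Hv]] | Hno].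
  2: { exfalso. assert (Hle : l <= l - eps).
       { apply Hlub. intros v Ev. apply Rnot_lt_le. intros Hlt. apply Hno. eauto. }
       destruct eps; simpl in *; lra. }
  apply (filter_prod_at_right_pinfty a0 b0); [lra|].
  intros a b Ha Hb. exists (RInt f a b). split.
  - apply (RInt_correct (V := R_CompleteNormedModule)). apply Hex. lra.
  - apply Heps. rewrite ball_R.
    assert (Hup : RInt f a b <= l) by (apply Hub; exists a, b; split; auto; lra).
    assert (Hlo : RInt f a0 b0 <= RInt f a b).
    { rewrite <- (RInt_Chasles f a a0 b), <- (RInt_Chasles f a0 b0 b) by (apply Hex; lra).
      assert (0 <= RInt f a a0) by (apply RInt_ge_0; [lra | apply Hex; lra | intros; apply Hpos; lra]).
      assert (0 <= RInt f b0 b) by (apply RInt_ge_0; [lra | apply Hex; lra | intros; apply Hpos; lra]).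
      change plus with Rplus. lra. }
    apply Rabs_def1; lra.
Qed.

Definition Gamma_integrand (x t : R) : R := Rpower t (x - 1) * exp (- t).

Lemma Gamma_integrand_pos (x t : R) : 0 < Gamma_integrand x t.
Proof. unfold Gamma_integrand, Rpower. apply Rmult_lt_0_compat; apply exp_pos. Qed.

Lemma continuous_Gamma_integrand (x t : R) : 0 < t -> continuous (Gamma_integrand x) t.
Proof.
  intros Ht. apply (ex_derive_continuous (K := R_AbsRing) (V := R_NormedModule)).
  unfold Gamma_integrand, Rpower. auto_derive. auto.
Qed.

(* From [ln t <= 2 sqrt t] and [2 a sqrt t <= 2 a^2 + t / 2]. *)
Lemma mul_ln_sub_le (a t : R) : 0 <= a -> 0 < t -> a * ln t - t <= 2 * a ^ 2 - t / 2.
Proof.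
  intros Ha Ht. set (s := sqrt t).
  assert (Hs : s * s = t) by (apply sqrt_sqrt; lra).
  assert (Hs0 : 0 < s) by (apply sqrt_lt_R0; lra).
  assert (Hln : ln t = 2 * ln s) by (rewrite <- Hs, ln_mult by lra; ring).
  assert (Hls : ln s <= s - 1).
  { assert (H := exp_ineq1_le (ln s)). rewrite exp_ln in H by lra. lra. }
  assert (a * ln s <= a * (s - 1)) by (apply Rmult_le_compat_l; lra).
  assert (0 <= (2 * a - s) ^ 2) by apply pow2_ge_0.
  rewrite Hln. nra.
Qed.

Lemma Gamma_integrand_le (x t : R) :
  1 <= x -> 0 < t -> Gamma_integrand x t <= exp (2 * (x - 1) ^ 2) * exp (- t / 2).
Proof.
  intros Hx Ht. unfold Gamma_integrand, Rpower. rewrite <- !exp_plus. apply exp_le_exp.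
  assert (H := mul_ln_sub_le (x - 1) t). lra.
Qed.

Lemma RInt_Gamma_integrand_le (x a b : R) :
  1 <= x -> 0 < a <= b -> RInt (Gamma_integrand x) a b <= 2 * exp (2 * (x - 1) ^ 2).
Proof.
  intros Hx Hab. set (E := exp (2 * (x - 1) ^ 2)).
  assert (HE : 0 < E) by apply exp_pos.
  set (F := fun t => - 2 * E * exp (- t / 2)).
  assert (HI : is_RInt (fun t => E * exp (- t / 2)) a b (minus (F b) (F a))).
  { apply (is_RInt_derive (V := R_CompleteNormedModule) F).
    - intros z _. unfold F. auto_derive; [auto | unfold Rdiv; field].
    - intros z _. apply (ex_derive_continuous (K := R_AbsRing) (V := R_NormedModule)).
      auto_derive. auto. }
  apply Rle_trans with (RInt (fun t => E * exp (- t / 2)) a b).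
  - apply RInt_le; [lra | | eexists; apply HI | intros t Ht; apply Gamma_integrand_le; lra].
    apply (ex_RInt_continuous (V := R_CompleteNormedModule)). intros z Hz.
    rewrite Rmin_left in Hz by lra. apply continuous_Gamma_integrand. lra.
  - rewrite (is_RInt_unique _ _ _ _ HI). unfold F, minus, plus, opp; simpl.
    assert (0 < exp (- b / 2)) by apply exp_pos.
    assert (exp (- a / 2) <= 1) by (rewrite <- exp_0; apply exp_le_exp; lra).
    nra.
Qed.

Lemma is_RInt_gen_Gamma (x : R) :
  1 <= x ->
  is_RInt_gen (Gamma_integrand x) (at_right 0) (Rbar_locally p_infty) (Gamma x) /\
  (forall a b, 0 < a <= b -> RInt (Gamma_integrand x) a b <= Gamma x).
Proof.
  intros Hx.
  destruct (is_RInt_gen_nonneg_bounded (Gamma_integrand x) (2 * exp (2 * (x - 1) ^ 2)))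
    as [l [Hl Hle]].
  - intros. left. apply Gamma_integrand_pos.
  - intros. apply continuous_Gamma_integrand. auto.
  - intros. apply RInt_Gamma_integrand_le; auto.
  - replace (Gamma x) with l; [auto|].
    symmetry. unfold Gamma. apply (is_RInt_gen_unique (V := R_CompleteNormedModule)). exact Hl.
Qed.

Lemma Gamma_pos (x : R) : 1 <= x -> 0 < Gamma x.
Proof.
  intros Hx. destruct (is_RInt_gen_Gamma x Hx) as [_ H].
  apply Rlt_le_trans with (RInt (Gamma_integrand x) 1 2); [|apply H; lra].
  assert (He : 0 < exp (-2)) by apply exp_pos.
  apply Rlt_le_trans with (RInt (fun _ => exp (-2)) 1 2).
  - rewrite RInt_const. simpl. unfold scal; simpl; unfold mult; simpl. nra.
  - apply RInt_le; [lra | apply ex_RInt_const | |].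
    + apply (ex_RInt_continuous (V := R_CompleteNormedModule)). intros z Hz.
      rewrite Rmin_left in Hz by lra. apply continuous_Gamma_integrand. lra.
    + intros t Ht. unfold Gamma_integrand, Rpower.
      assert (0 <= ln t) by (rewrite <- ln_1; apply ln_le; lra).
      assert (exp 0 <= exp ((x - 1) * ln t)) by (apply exp_le_exp, Rmult_le_pos; lra).
      rewrite exp_0 in *.
      assert (exp (-2) <= exp (- t)) by (apply exp_le_exp; lra).
      nra.
Qed.

(* The boundary term of the integration by parts giving [Gamma (x + 1) = x Gamma x]. *)
Definition Gamma_ibp_term (x t : R) : R := - (Rpower t x * exp (- t)).

Lemma is_derive_Gamma_ibp_term (x t : R) :
  0 < t -> is_derive (Gamma_ibp_term x) t (Gamma_integrand (x + 1) t - x * Gamma_integrand x t).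
Proof.
  intros Ht. unfold Gamma_ibp_term, Gamma_integrand, Rpower.
  replace (x + 1 - 1) with x by ring.
  assert (E : exp ((x - 1) * ln t) = exp (x * ln t) / t).
  { replace ((x - 1) * ln t) with (x * ln t + - ln t) by ring.
    rewrite exp_plus, exp_Ropp, exp_ln by lra. reflexivity. }
  rewrite E. auto_derive; [lra | field; lra].
Qed.

Lemma Gamma_ibp_term_at_0 (x : R) :
  1 <= x -> filterlim (Gamma_ibp_term x) (at_right 0) (locally 0).
Proof.
  intros Hx P [eps H].
  assert (He : 0 < Rmin eps 1) by (apply Rmin_pos; [apply cond_pos | lra]).
  exists (mkposreal _ He). intros t Ht Ht0. apply H. rewrite ball_R in *.
  simpl in Ht. rewrite Rminus_0_r in *. apply Rabs_def2 in Ht.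
  assert (Hm1 := Rmin_r eps 1). assert (Hme := Rmin_l eps 1).
  unfold Gamma_ibp_term, Rpower.
  assert (ln t <= 0) by (rewrite <- ln_1; apply ln_le; lra).
  assert (exp (x * ln t) <= t) by (rewrite <- (exp_ln t) at 2 by lra; apply exp_le_exp; nra).
  assert (exp (- t) <= 1) by (rewrite <- exp_0; apply exp_le_exp; lra).
  assert (0 < exp (x * ln t)) by apply exp_pos.
  assert (0 < exp (- t)) by apply exp_pos.
  rewrite Rabs_Ropp, Rabs_pos_eq by nra. nra.
Qed.

Lemma Gamma_ibp_term_at_pinfty (x : R) :
  1 <= x -> filterlim (Gamma_ibp_term x) (Rbar_locally p_infty) (locally 0).
Proof.
  intros Hx P [eps H].
  set (E := exp (2 * x ^ 2)).
  assert (HE : 0 < E) by apply exp_pos.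
  assert (Heps := cond_pos eps).
  exists (2 * E / eps + 1). intros t Ht. apply H. rewrite ball_R.
  assert (H0 : 0 < 2 * E / eps) by (apply Rdiv_lt_0_compat; lra).
  assert (Ht0 : 0 < t) by lra.
  unfold Gamma_ibp_term, Rpower. rewrite Rminus_0_r, Rabs_Ropp, <- exp_plus.
  rewrite Rabs_pos_eq by (left; apply exp_pos).
  assert (H1 : exp (x * ln t + - t) <= E * exp (- t / 2)).
  { unfold E. rewrite <- exp_plus. apply exp_le_exp.
    assert (H2 := mul_ln_sub_le x t). lra. }
  assert (H2 : exp (- t / 2) * (t / 2) < 1).
  { assert (H3 := exp_ineq1 (t / 2)).
    replace (- t / 2) with (- (t / 2)) by field. rewrite exp_Ropp.
    assert (0 < exp (t / 2)) by apply exp_pos.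
    apply Rmult_lt_reg_l with (exp (t / 2)); auto.
    rewrite <- Rmult_assoc, Rinv_r by lra. lra. }
  assert (H3 : 2 * E / eps * eps = 2 * E) by (field; lra).
  assert (0 < exp (- t / 2)) by apply exp_pos.
  apply Rle_lt_trans with (E * exp (- t / 2)); auto.
  apply Rmult_lt_reg_r with t; auto. nra.
Qed.

Lemma Gamma_succ (x : R) : 1 <= x -> Gamma (x + 1) = x * Gamma x.
Proof.
  intros Hx.
  assert (Hwin : forall P : R -> Prop, (forall z, 0 < z -> P z) ->
            filter_prod (at_right 0) (Rbar_locally p_infty)
              (fun ab => forall z, Rmin (fst ab) (snd ab) <= z <= Rmax (fst ab) (snd ab) -> P z)).
  { intros P HP. apply (filter_prod_at_right_pinfty 1 1); [lra|].
    intros a b Ha Hb z Hz. apply HP. simpl in Hz. rewrite Rmin_left in Hz by lra. lra. }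
  assert (HD : is_RInt_gen (Derive (Gamma_ibp_term x)) (at_right 0) (Rbar_locally p_infty) (0 - 0)).
  { apply is_RInt_gen_Derive.
    - apply Hwin. intros z Hz. eexists. apply is_derive_Gamma_ibp_term. auto.
    - apply Hwin. intros z Hz.
      apply continuous_ext_loc with (fun t => Gamma_integrand (x + 1) t - x * Gamma_integrand x t).
      + exists (mkposreal z Hz). intros y Hy. rewrite ball_R in Hy. simpl in Hy.
        apply Rabs_def2 in Hy. symmetry. apply is_derive_unique, is_derive_Gamma_ibp_term. lra.
      + apply (ex_derive_continuous (K := R_AbsRing) (V := R_NormedModule)).
        unfold Gamma_integrand, Rpower. auto_derive. lra.
    - apply Gamma_ibp_term_at_0; auto.
    - apply Gamma_ibp_term_at_pinfty; auto. }
  destruct (is_RInt_gen_Gamma x Hx) as [Hg _].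
  assert (HP := is_RInt_gen_plus _ _ _ _ (is_RInt_gen_scal _ x _ Hg) HD).
  assert (HE : is_RInt_gen (Gamma_integrand (x + 1)) (at_right 0) (Rbar_locally p_infty)
                 (plus (scal x (Gamma x)) (0 - 0))).
  { eapply is_RInt_gen_ext; [|exact HP].
    apply (filter_prod_at_right_pinfty 1 1); [lra|].
    intros a b Ha Hb z Hz. simpl in Hz. rewrite Rmin_left in Hz by lra.
    rewrite (is_derive_unique _ _ _ (is_derive_Gamma_ibp_term x z ltac:(lra))).
    unfold plus, scal; simpl; unfold mult; simpl. ring. }
  change (Gamma (x + 1)) with (RInt_gen (V := R_CompleteNormedModule)
    (Gamma_integrand (x + 1)) (at_right 0) (Rbar_locally p_infty)).
  rewrite (is_RInt_gen_unique (V := R_CompleteNormedModule) _ _ HE).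
  unfold plus, scal; simpl; unfold mult; simpl. ring.
Qed.

Lemma Gamma_integrand_midpoint (a b t : R) :
  0 < t -> Gamma_integrand ((a + b) / 2) t ^ 2 = Gamma_integrand a t * Gamma_integrand b t.
Proof.
  intros Ht. unfold Gamma_integrand, Rpower. simpl. rewrite Rmult_1_r.
  set (e := exp (- t)).
  transitivity (exp (((a + b) / 2 - 1) * ln t + ((a + b) / 2 - 1) * ln t) * (e * e)).
  - rewrite exp_plus. ring.
  - replace (((a + b) / 2 - 1) * ln t + ((a + b) / 2 - 1) * ln t)
      with ((a - 1) * ln t + (b - 1) * ln t) by field.
    rewrite exp_plus. ring.
Qed.

Lemma Gamma_integrand_midpoint_le (a b lam t : R) :
  0 < lam -> 0 < t ->
  2 * Gamma_integrand ((a + b) / 2) t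
    <= lam * Gamma_integrand a t + / lam * Gamma_integrand b t.
Proof.
  intros Hlam Ht.
  assert (Hsq := Gamma_integrand_midpoint a b t Ht).
  assert (P1 := Gamma_integrand_pos ((a + b) / 2) t).
  assert (P2 := Gamma_integrand_pos a t). assert (P3 := Gamma_integrand_pos b t).
  set (u := lam * Gamma_integrand a t). set (v := / lam * Gamma_integrand b t).
  assert (Huv : u * v = Gamma_integrand ((a + b) / 2) t ^ 2) by (unfold u, v; rewrite Hsq; field; lra).
  assert (0 < u) by (unfold u; apply Rmult_lt_0_compat; auto).
  assert (0 < v) by (unfold v; apply Rmult_lt_0_compat; auto; apply Rinv_0_lt_compat; auto).
  apply Rnot_lt_le. intros Hlt.
  assert (0 <= (u - v) ^ 2) by apply pow2_ge_0. nra.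
Qed.

Lemma Gamma_midpoint_sq_le (a b : R) :
  1 <= a -> 1 <= b -> Gamma ((a + b) / 2) ^ 2 <= Gamma a * Gamma b.
Proof.
  intros Ha Hb. set (m := (a + b) / 2).
  assert (Hm : 1 <= m) by (unfold m; lra).
  assert (Pa := Gamma_pos a Ha). assert (Pb := Gamma_pos b Hb). assert (Pm := Gamma_pos m Hm).
  set (lam := Gamma m / Gamma a).
  assert (Hlam : 0 < lam) by (apply Rdiv_lt_0_compat; auto).
  destruct (is_RInt_gen_Gamma a Ha) as [Ga _].
  destruct (is_RInt_gen_Gamma b Hb) as [Gb _].
  destruct (is_RInt_gen_Gamma m Hm) as [Gm _].
  assert (Hord : filter_prod (at_right 0) (Rbar_locally p_infty) (fun ab => fst ab <= snd ab)).
  { apply (filter_prod_at_right_pinfty 1 1); [lra | simpl; intros; lra]. }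
  assert (Hdom : filter_prod (at_right 0) (Rbar_locally p_infty) (fun ab => forall t,
            fst ab <= t <= snd ab ->
            Rabs (2 * Gamma_integrand m t) <= lam * Gamma_integrand a t + / lam * Gamma_integrand b t)).
  { apply (filter_prod_at_right_pinfty 1 1); [lra|]. simpl. intros a' b' Ha' Hb' t Ht.
    rewrite Rabs_pos_eq by (assert (Hg := Gamma_integrand_pos m t); lra).
    apply Gamma_integrand_midpoint_le; lra. }
  assert (H := RInt_gen_norm (V := R_CompleteNormedModule) _ _ _ _ Hord Hdom
    (is_RInt_gen_scal _ 2 _ Gm)
    (is_RInt_gen_plus _ _ _ _ (is_RInt_gen_scal _ lam _ Ga) (is_RInt_gen_scal _ (/ lam) _ Gb))).
  unfold norm, plus, scal in H; simpl in H; unfold mult, abs in H; simpl in H.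
  assert (Hk : 2 * Gamma m <= lam * Gamma a + / lam * Gamma b)
    by (eapply Rle_trans; [apply Rle_abs | exact H]).
  unfold lam in Hk.
  replace (Gamma m / Gamma a * Gamma a) with (Gamma m) in Hk by (field; lra).
  replace (/ (Gamma m / Gamma a) * Gamma b) with (Gamma a * Gamma b / Gamma m) in Hk by (field; lra).
  assert (Hk2 : Gamma m <= Gamma a * Gamma b / Gamma m) by lra.
  apply Rmult_le_compat_r with (r := Gamma m) in Hk2; [|lra].
  replace (Gamma a * Gamma b / Gamma m * Gamma m) with (Gamma a * Gamma b) in Hk2 by (field; lra).
  simpl. lra.
Qed.

Lemma Rdiv_le_cross (a b c d : R) : 0 < b -> 0 < d -> a * d <= c * b -> a / b <= c / d.
Proof.
  intros Hb Hd H.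
  replace (a / b) with ((a * d) * / (b * d)) by (field; lra).
  replace (c / d) with ((c * b) * / (b * d)) by (field; lra).
  apply Rmult_le_compat_r; [left; apply Rinv_0_lt_compat; nra | auto].
Qed.

(* [ln Gamma t = stirling t + ln (sqrt (2 pi)) + O(1/t)]; only increments of [stirling] are used. *)
Definition stirling (t : R) : R := (t - 1/2) * ln t - t.

Lemma stirling_succ (t : R) :
  1 <= t -> 0 <= stirling (t + 1) - stirling t - ln t <= 1 / (12 * t ^ 2).
Proof.
  intros Ht. set (w := / t).
  assert (Hw : 0 < w) by (apply Rinv_0_lt_compat; lra).
  assert (E : stirling (t + 1) - stirling t - ln t = ((1 + w / 2) * ln (1 + w) - w) / w).
  { assert (ln (t + 1) = ln t + ln (1 + w)).
    { rewrite <- ln_mult by lra. f_equal. unfold w. field. lra. }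
    unfold stirling. rewrite H. unfold w. field. lra. }
  rewrite E. destruct (ln_1p_trapezoid w) as [A B]; [lra|].
  split; [apply Rdiv_le_0_compat; lra|].
  apply Rle_div_l; [lra|].
  replace (1 / (12 * t ^ 2) * w) with (w ^ 3 / 12) by (unfold w; field; lra). lra.
Qed.

Lemma ln_Gamma_add_nat (y : R) (m : nat) :
  2 <= y ->
  0 <= stirling (y + INR m) - stirling y - (ln (Gamma (y + INR m)) - ln (Gamma y))
    <= 1 / (y - 1) - 1 / (y + INR m - 1).
Proof.
  intros Hy. induction m as [|m IH].
  - simpl. rewrite Rplus_0_r. lra.
  - rewrite S_INR. set (t := y + INR m) in IH.
    assert (Ht : 2 <= t) by (unfold t; assert (Hm := pos_INR m); lra).
    replace (y + (INR m + 1)) with (t + 1) by (unfold t; ring).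
    rewrite Gamma_succ, ln_mult by (try apply Gamma_pos; lra).
    destruct (stirling_succ t) as [A B]; [lra|].
    assert (C : 1 / (12 * t ^ 2) <= 1 / (t - 1) - 1 / t).
    { replace (1 / (t - 1) - 1 / t) with (1 / (t * (t - 1))) by (field; lra).
      apply Rdiv_le_cross; nra. }
    replace (t + 1 - 1) with t by ring. lra.
Qed.

(* Log-convexity of [Gamma] applied to [y, y + 1/2, y + 1] and to [y + 1/2, y + 1, y + 3/2]. *)
Lemma ln_Gamma_add_half (y : R) :
  2 <= y -> ln y - ln (y + 1/2) / 2 <= ln (Gamma (y + 1/2)) - ln (Gamma y) <= ln y / 2.
Proof.
  intros Hy.
  assert (P0 := Gamma_pos y ltac:(lra)). assert (P1 := Gamma_pos (y + 1/2) ltac:(lra)).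
  assert (C1 := Gamma_midpoint_sq_le y (y + 1) ltac:(lra) ltac:(lra)).
  replace ((y + (y + 1)) / 2) with (y + 1/2) in C1 by field.
  assert (C2 := Gamma_midpoint_sq_le (y + 1/2) (y + 1/2 + 1) ltac:(lra) ltac:(lra)).
  replace ((y + 1/2 + (y + 1/2 + 1)) / 2) with (y + 1) in C2 by field.
  rewrite Gamma_succ in C1 by lra. rewrite !Gamma_succ in C2 by lra.
  apply ln_le in C1; [|apply pow_lt; auto]. apply ln_le in C2; [|apply pow_lt; nra].
  assert (Hsq : forall z, 0 < z -> ln (z ^ 2) = 2 * ln z).
  { intros z Hz. simpl. rewrite Rmult_1_r, ln_mult by lra. ring. }
  rewrite Hsq in C1, C2 by nra. rewrite !ln_mult in C1 by nra. rewrite !ln_mult in C2 by nra.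
  split; lra.
Qed.

Lemma ln_Gamma_add_half_nat (y : R) (p : nat) :
  2 <= y ->
  Rabs (ln (Gamma (y + INR p / 2)) - ln (Gamma y) - (stirling (y + INR p / 2) - stirling y))
    <= 3 / y.
Proof.
  intros Hy.
  assert (Hinv : 1 / (y - 1) <= 2 / y) by (apply Rdiv_le_cross; lra).
  destruct (Nat.Even_or_Odd p) as [[m ->] | [m ->]].
  - replace (INR (2 * m) / 2) with (INR m) by (rewrite mult_INR; simpl; field).
    destruct (ln_Gamma_add_nat y m Hy) as [A B].
    assert (0 < 1 / (y + INR m - 1)) by (assert (Hm := pos_INR m); apply Rdiv_lt_0_compat; lra).
    assert (2 / y <= 3 / y) by (apply Rdiv_le_cross; lra).
    rewrite Rabs_left1 by lra. lra.
  - replace (y + INR (2 * m + 1) / 2) with (y + 1/2 + INR m)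
      by (rewrite plus_INR, mult_INR; simpl; field).
    destruct (ln_Gamma_add_nat (y + 1/2) m ltac:(lra)) as [A B].
    destruct (ln_Gamma_add_half y Hy) as [C D].
    assert (0 < 1 / (y + 1/2 + INR m - 1)) by (assert (Hm := pos_INR m); apply Rdiv_lt_0_compat; lra).
    set (w := 1 / (2 * y)).
    assert (Hw : 0 < w) by (apply Rdiv_lt_0_compat; lra).
    assert (Lw : ln (y + 1/2) = ln y + ln (1 + w)).
    { rewrite <- ln_mult by lra. f_equal. unfold w. field. lra. }
    assert (ES : stirling (y + 1/2) - stirling y = ln y / 2 + y * (ln (1 + w) - w)).
    { unfold stirling. rewrite Lw. unfold w. field. lra. }
    destruct (ln_1p_bound1 w) as [L1 L2]; [lra|].
    assert (Hr : - (1 / (8 * y)) <= y * (ln (1 + w) - w) <= 0).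
    { split.
      - replace (- (1 / (8 * y))) with (y * - (w ^ 2 / 2)) by (unfold w; field; lra).
        apply Rmult_le_compat_l; lra.
      - assert (0 <= y * (w - ln (1 + w))) by (apply Rmult_le_pos; lra). lra. }
    assert (E1 : 1 / (y + 1/2 - 1) <= 2 / y) by (apply Rdiv_le_cross; lra).
    set (iy := 1 / y).
    replace (2 / y) with (2 * iy) in E1 by (unfold iy; field; lra).
    replace (3 / y) with (3 * iy) by (unfold iy; field; lra).
    replace (1 / (8 * y)) with (iy / 8) in Hr by (unfold iy; field; lra).
    assert (ln (1 + w) <= iy / 2) by (replace (iy / 2) with w by (unfold iy, w; field; lra); lra).
    rewrite Lw in C.
    apply Rabs_le. split; lra.
Qed.

Fixpoint sumR (f : nat -> R) (m : nat) : R :=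
  match m with
  | O => 0
  | S m' => sumR f m' + f m'
  end.

Lemma sumR_ext (f g : nat -> R) (m : nat) :
  (forall j, (j < m)%nat -> f j = g j) -> sumR f m = sumR g m.
Proof.
  induction m as [|m IH]; intros H; simpl; auto.
  rewrite IH by (intros; apply H; lia). rewrite H by lia. reflexivity.
Qed.

Lemma sumR_add_sub (f g h : nat -> R) (m : nat) :
  sumR (fun j => f j + g j - h j) m = sumR f m + sumR g m - sumR h m.
Proof. induction m as [|m IH]; simpl; [ring|]. rewrite IH. ring. Qed.

Lemma sumR_const (c : R) (m : nat) : sumR (fun _ => c) m = INR m * c.
Proof. induction m as [|m IH]; simpl sumR; [simpl; ring|]. rewrite IH, S_INR. ring. Qed.

Lemma sumR_telescope (F : R -> R) (m : nat) :
  sumR (fun j => F (INR j + 1) - F (INR j)) m = F (INR m) - F 0.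
Proof. induction m as [|m IH]; simpl sumR; [simpl; ring|]. rewrite IH, S_INR. ring. Qed.

Lemma Rabs_sumR_le (f : nat -> R) (m : nat) (B : R) :
  (forall j, (j < m)%nat -> Rabs (f j) <= B) -> Rabs (sumR f m) <= INR m * B.
Proof.
  induction m as [|m IH]; intros H; simpl sumR.
  - simpl. rewrite Rabs_R0. lra.
  - rewrite S_INR. eapply Rle_trans; [apply Rabs_triang|].
    assert (Rabs (sumR f m) <= INR m * B) by (apply IH; intros; apply H; lia).
    assert (Rabs (f m) <= B) by (apply H; lia). lra.
Qed.

Lemma prodR_pos (f : nat -> R) (m : nat) :
  (forall j, (j < m)%nat -> 0 < f j) -> 0 < prodR f m.
Proof.
  induction m as [|m IH]; intros H; simpl; [lra|].
  apply Rmult_lt_0_compat; [apply IH; intros |]; apply H; lia.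
Qed.

Lemma ln_prodR (f : nat -> R) (m : nat) :
  (forall j, (j < m)%nat -> 0 < f j) -> ln (prodR f m) = sumR (fun j => ln (f j)) m.
Proof.
  induction m as [|m IH]; intros H; simpl; [apply ln_1|].
  rewrite ln_mult.
  - rewrite IH by (intros j Hj; apply H; lia). reflexivity.
  - apply prodR_pos. intros j Hj. apply H. lia.
  - apply H. lia.
Qed.

Definition psi (M j : R) : R := (M - j - 1) * ln (1 - j / M).

Definition psi_taylor (M j : R) : R := - j + j ^ 2 / (2 * M) + j ^ 3 / (6 * M ^ 2) + j / M.

Lemma psi_taylor_error (M j : R) :
  0 < M -> 0 <= j <= M / 2 ->
  Rabs (psi M j - psi_taylor M j) <= j ^ 4 / (6 * M ^ 3) + j ^ 2 / M ^ 2.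
Proof.
  intros HM Hj. set (u := j / M).
  assert (Hu : 0 <= u <= 1/2).
  { unfold u. split; [apply Rdiv_le_0_compat | apply Rle_div_l]; lra. }
  set (L := ln (1 - u)).
  assert (E : psi M j - psi_taylor M j
              = M * ((1 - u) * L + u - u ^ 2 / 2 - u ^ 3 / 6) + (- L - u)).
  { unfold psi, psi_taylor, L, u. field. lra. }
  rewrite E. destruct (xln_1m_bound3 u Hu) as [A1 A2]. destruct (ln_1m_bound1 u Hu) as [B1 B2].
  fold L in A1, A2, B1, B2.
  replace (j ^ 4 / (6 * M ^ 3)) with (M * (u ^ 4 / 6)) by (unfold u; field; lra).
  replace (j ^ 2 / M ^ 2) with (u ^ 2) by (unfold u; field; lra).
  assert (0 <= M * ((1 - u) * L + u - u ^ 2 / 2 - u ^ 3 / 6)) by (apply Rmult_le_pos; lra).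
  assert (M * ((1 - u) * L + u - u ^ 2 / 2 - u ^ 3 / 6) <= M * (u ^ 4 / 6))
    by (apply Rmult_le_compat_l; lra).
  rewrite Rabs_pos_eq by lra. lra.
Qed.

Definition K_approx_R (N P Q : R) : R :=
  - (P * Q) / 2 + Q * (Q + 1) / 4 * ln (1 + P / (N - P))
  - P * Q ^ 3 / (12 * N ^ 2) - (N - P - Q - 1) / 2 * Q * ln (1 - P / N).

Lemma K_approx_INR (n p q : nat) : K_approx n p q = K_approx_R (INR n) (INR p) (INR q).
Proof. reflexivity. Qed.

(* With [D = N - P]: [(N - j) / 2 = N/2 (1 - j/N)] and [(D - j) / 2 = N/2 (1 - P/N) (1 - j/D)]. *)
Lemma summand_identity (N P j : R) :
  0 < N -> 0 <= P -> 0 < N - P -> 0 <= j < N - P ->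
  P / 2 * ln (2 / N) + (stirling ((N - j) / 2) - stirling ((N - P - j) / 2))
    - (K_approx_R N P (j + 1) - K_approx_R N P j)
  = psi N j / 2 - psi (N - P) j / 2 + P * (3 * j ^ 2 + 3 * j + 1) / (12 * N ^ 2).
Proof.
  intros HN HP HD Hj.
  assert (HjN : j / N < 1) by (apply (Rdiv_lt_1 j N HN); lra).
  assert (HjD : j / (N - P) < 1) by (apply (Rdiv_lt_1 j (N - P) HD); lra).
  assert (HPN : 0 < 1 - P / N).
  { replace (1 - P / N) with ((N - P) / N) by (field; lra). apply Rdiv_lt_0_compat; lra. }
  assert (l1 : ln ((N - j) / 2) = ln (N / 2) + ln (1 - j / N)).
  { rewrite <- ln_mult by lra. f_equal. field. lra. }
  assert (l2 : ln ((N - P - j) / 2) = ln (N / 2) + ln (1 - P / N) + ln (1 - j / (N - P))).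
  { rewrite <- !ln_mult by (try apply Rmult_lt_0_compat; lra). f_equal. field. lra. }
  assert (l3 : ln (2 / N) = - ln (N / 2)).
  { rewrite <- ln_Rinv by lra. f_equal. field. lra. }
  assert (l4 : ln (1 + P / (N - P)) = - ln (1 - P / N)).
  { rewrite <- ln_Rinv by lra. f_equal. field. lra. }
  unfold stirling, K_approx_R, psi. rewrite l1, l2, l3, l4. field. lra.
Qed.

Ltac Rpos := repeat (apply Rmult_lt_0_compat || apply pow_lt || apply Rinv_0_lt_compat); try lra.

Section TaylorDifference.

Variables (N D j C d : R).
Hypotheses (Hd : 0 < d) (HN : 0 < N) (HdN : d * N <= D) (HDN : D <= N)
  (Hj : 0 <= j) (HjP : j * (N - D) <= C * N) (Hjj : j * j <= C * N).

Let HD : 0 < D.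
Proof. nra. Qed.

Let HjP0 : 0 <= j * (N - D).
Proof. apply Rmult_le_pos; lra. Qed.

Let HNd : N <= D / d.
Proof. apply Rle_div_r; [lra|]. rewrite Rmult_comm. lra. Qed.

Lemma term_j2_le : j ^ 2 * (N - D) ^ 2 / (4 * N ^ 2 * D) <= C ^ 2 / (4 * d) / N.
Proof.
  apply Rdiv_le_cross; [Rpos | auto|].
  replace (j ^ 2 * (N - D) ^ 2 * N) with ((j * (N - D)) ^ 2 * N) by ring.
  replace (C ^ 2 / (4 * d) * (4 * N ^ 2 * D)) with ((C * N) ^ 2 * (D / d)) by (field; lra).
  apply Rmult_le_compat; [apply pow2_ge_0 | lra | apply pow_incr; nra | auto].
Qed.

Lemma term_j3_le : j ^ 3 * (N - D) * (N + D) / (12 * N ^ 2 * D ^ 2) <= C ^ 2 / (6 * d ^ 2) / N.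
Proof.
  apply Rdiv_le_cross; [Rpos | auto|].
  replace (j ^ 3 * (N - D) * (N + D) * N) with ((j * j) * (j * (N - D)) * ((N + D) * N)) by ring.
  replace (C ^ 2 / (6 * d ^ 2) * (12 * N ^ 2 * D ^ 2))
    with ((C * N) * (C * N) * (2 * (D / d) ^ 2)) by (field; lra).
  apply Rmult_le_compat; [apply Rmult_le_pos; nra | nra | apply Rmult_le_compat; nra |].
  assert (N * N <= (D / d) ^ 2) by (simpl; rewrite Rmult_1_r; apply Rmult_le_compat; lra).
  nra.
Qed.

Lemma term_j1_le : j * (N - D) / (2 * N * D) <= C / (2 * d) / N.
Proof.
  apply Rdiv_le_cross; [Rpos | auto|].
  replace (C / (2 * d) * (2 * N * D)) with ((C * N) * (D / d)) by (field; lra).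
  apply Rmult_le_compat; nra.
Qed.

Lemma term_j0_le : (N - D) * (3 * j + 1) / (12 * N ^ 2) <= (3 * C + 1) / 12 / N.
Proof.
  apply Rdiv_le_cross; [Rpos | auto|].
  replace ((3 * C + 1) / 12 * (12 * N ^ 2)) with (((3 * C + 1) * N) * N) by (field; lra).
  apply Rmult_le_compat_r; nra.
Qed.

Lemma psi_taylor_diff_le :
  Rabs ((psi_taylor N j - psi_taylor D j) / 2 + (N - D) * (3 * j ^ 2 + 3 * j + 1) / (12 * N ^ 2))
  <= (C ^ 2 / (4 * d) + C ^ 2 / (6 * d ^ 2) + C / (2 * d) + (3 * C + 1) / 12) / N.
Proof.
  replace ((psi_taylor N j - psi_taylor D j) / 2 + (N - D) * (3 * j ^ 2 + 3 * j + 1) / (12 * N ^ 2))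
    with (- (j ^ 2 * (N - D) ^ 2 / (4 * N ^ 2 * D)) - j ^ 3 * (N - D) * (N + D) / (12 * N ^ 2 * D ^ 2)
          - j * (N - D) / (2 * N * D) + (N - D) * (3 * j + 1) / (12 * N ^ 2))
    by (unfold psi_taylor; field; lra).
  assert (0 <= j ^ 2 * (N - D) ^ 2 / (4 * N ^ 2 * D))
    by (apply Rdiv_le_0_compat; [apply Rmult_le_pos; apply pow2_ge_0 | Rpos]).
  assert (0 <= j ^ 3 * (N - D) * (N + D) / (12 * N ^ 2 * D ^ 2))
    by (apply Rdiv_le_0_compat; [repeat apply Rmult_le_pos; try apply pow_le; lra | Rpos]).
  assert (0 <= j * (N - D) / (2 * N * D)) by (apply Rdiv_le_0_compat; [nra | Rpos]).
  assert (0 <= (N - D) * (3 * j + 1) / (12 * N ^ 2)) by (apply Rdiv_le_0_compat; [nra | Rpos]).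
  assert (K2 := term_j2_le). assert (K3 := term_j3_le).
  assert (K1 := term_j1_le). assert (K0 := term_j0_le).
  replace ((C ^ 2 / (4 * d) + C ^ 2 / (6 * d ^ 2) + C / (2 * d) + (3 * C + 1) / 12) / N)
    with (C ^ 2 / (4 * d) / N + C ^ 2 / (6 * d ^ 2) / N + C / (2 * d) / N + (3 * C + 1) / 12 / N)
    by (field; lra).
  apply Rabs_le. split; lra.
Qed.

End TaylorDifference.

Lemma psi_taylor_error_le (N M j C d : R) :
  0 < d -> 0 <= C -> 0 < N -> d * N <= M -> 0 <= j -> j * j <= C * N ->
  j ^ 4 / (6 * M ^ 3) + j ^ 2 / M ^ 2 <= (C ^ 2 / (6 * d ^ 3) + C / d ^ 2) / N.
Proof.
  intros Hd HC HN HM Hj Hjj.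
  assert (HMp : 0 < M) by nra.
  assert (HNM : N <= M / d) by (apply Rle_div_r; [lra|]; rewrite Rmult_comm; lra).
  assert (A : j ^ 4 / (6 * M ^ 3) <= C ^ 2 / (6 * d ^ 3) / N).
  { apply Rdiv_le_cross; [Rpos | auto|].
    replace (j ^ 4 * N) with ((j * j) ^ 2 * N) by ring.
    replace (C ^ 2 / (6 * d ^ 3) * (6 * M ^ 3)) with ((C * N) ^ 2 * ((M / d) ^ 3 / N ^ 2))
      by (field; lra).
    apply Rmult_le_compat; [apply pow2_ge_0 | lra | apply pow_incr; nra |].
    apply Rle_trans with (N ^ 3 / N ^ 2); [right; field; lra|].
    unfold Rdiv. apply Rmult_le_compat_r; [left; Rpos | apply pow_incr; lra]. }
  assert (B : j ^ 2 / M ^ 2 <= C / d ^ 2 / N).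
  { apply Rdiv_le_cross; [Rpos | auto|].
    replace (C / d ^ 2 * M ^ 2) with (C * (M / d) ^ 2) by (field; lra).
    replace (j ^ 2 * N) with ((j * j) * N) by ring.
    apply Rle_trans with (C * N * N); [apply Rmult_le_compat_r; lra|].
    rewrite Rmult_assoc. apply Rmult_le_compat_l; [lra|].
    replace (N * N) with (N ^ 2) by ring. apply pow_incr; lra. }
  replace ((C ^ 2 / (6 * d ^ 3) + C / d ^ 2) / N)
    with (C ^ 2 / (6 * d ^ 3) / N + C / d ^ 2 / N) by (field; lra).
  lra.
Qed.

Definition summand_constant (d C : R) : R :=
  8 / d + (C ^ 2 / (4 * d) + C ^ 2 / (6 * d ^ 2) + C / (2 * d) + (3 * C + 1) / 12)
  + (C ^ 2 / (6 * d ^ 3) + C / d ^ 2).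

Lemma summand_bound (N : R) (p : nat) (C d j : R) :
  0 < d <= 1 -> 0 <= C -> 0 < N -> d * N <= N - INR p -> 6 <= d * N ->
  0 <= j <= d * N / 4 -> j * INR p <= C * N -> j * j <= C * N ->
  Rabs (INR p / 2 * ln (2 / N) + (ln (Gamma ((N - j) / 2)) - ln (Gamma ((N - INR p - j) / 2)))
        - (K_approx_R N (INR p) (j + 1) - K_approx_R N (INR p) j))
  <= summand_constant d C / N.
Proof.
  intros Hd HC HN HD Hd6 Hj HjP Hjj.
  assert (HP : 0 <= INR p) by apply pos_INR.
  set (P := INR p) in *.
  set (y := (N - P - j) / 2).
  assert (Hy : 3 * d * N / 8 <= y) by (unfold y; lra).
  assert (Ey : (N - j) / 2 = y + P / 2) by (unfold y; field).
  assert (EG : Rabs (ln (Gamma (y + P / 2)) - ln (Gamma y) - (stirling (y + P / 2) - stirling y))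
               <= 8 / (d * N)).
  { eapply Rle_trans; [apply ln_Gamma_add_half_nat; lra|].
    apply Rdiv_le_cross; [lra | Rpos | lra]. }
  assert (ET := psi_taylor_diff_le N (N - P) j C d ltac:(lra) HN HD ltac:(lra) ltac:(lra)
                  ltac:(replace (N - (N - P)) with P by ring; lra) Hjj).
  replace (N - (N - P)) with P in ET by ring.
  assert (EN : Rabs (psi N j - psi_taylor N j) <= (C ^ 2 / (6 * d ^ 3) + C / d ^ 2) / N).
  { eapply Rle_trans; [apply psi_taylor_error; lra|].
    apply (psi_taylor_error_le N N j C d); lra. }
  assert (ED : Rabs (psi (N - P) j - psi_taylor (N - P) j) <= (C ^ 2 / (6 * d ^ 3) + C / d ^ 2) / N).
  { eapply Rle_trans; [apply psi_taylor_error; lra|].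
    apply (psi_taylor_error_le N (N - P) j C d); lra. }
  assert (W := summand_identity N P j HN HP ltac:(lra) ltac:(lra)).
  rewrite Ey in W |- *. fold y in W.
  replace (summand_constant d C / N)
    with (8 / (d * N) + (C ^ 2 / (4 * d) + C ^ 2 / (6 * d ^ 2) + C / (2 * d) + (3 * C + 1) / 12) / N
          + (C ^ 2 / (6 * d ^ 3) + C / d ^ 2) / N) by (unfold summand_constant; field; lra).
  apply Rabs_le_between in EG, ET, EN, ED.
  apply Rabs_le. split; lra.
Qed.

Lemma ln_K_error_bound (n p q : nat) (d C : R) :
  0 < d <= 1 -> 0 <= C -> (q <= p)%nat ->
  INR p <= (1 - d) * INR n -> INR p * INR q <= C * INR n ->
  16 * C / d ^ 2 <= INR n -> 6 / d <= INR n ->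
  Rabs (ln (K n p q) - K_approx n p q) <= INR q * (summand_constant d C / INR n).
Proof.
  intros Hd HC Hqp HPN HPQ HN16 HN6.
  set (N := INR n) in *. set (P := INR p) in *. set (Q := INR q) in *.
  assert (HQP : Q <= P) by (apply le_INR; auto).
  assert (HQ0 : 0 <= Q) by apply pos_INR.
  assert (Hd6 : 6 <= d * N) by (apply Rle_div_l in HN6; lra).
  assert (HN : 0 < N) by nra.
  assert (HQQ : Q * Q <= C * N) by nra.
  assert (HQd : Q <= d * N / 4).
  { apply Rle_div_l in HN16; [|Rpos].
    apply Rnot_lt_le. intros Hlt. nra. }
  assert (Hargs : forall j, (j < q)%nat -> 2 <= (N - INR j) / 2 /\ 2 <= (N - P - INR j) / 2).
  { intros j Hj. assert (INR j <= Q) by (apply le_INR; lia).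
    assert (0 <= INR j) by apply pos_INR. split; lra. }
  assert (EK : ln (K n p q) = sumR (fun _ => P / 2 * ln (2 / N)) q +
      sumR (fun j => ln (Gamma ((N - INR j) / 2)) - ln (Gamma ((N - P - INR j) / 2))) q).
  { unfold K. fold N P Q.
    assert (Hpos : forall j, (j < q)%nat ->
              0 < Gamma ((N - INR j) / 2) / Gamma ((N - P - INR j) / 2)).
    { intros j Hj. destruct (Hargs j Hj). apply Rdiv_lt_0_compat; apply Gamma_pos; lra. }
    rewrite ln_mult, ln_prodR by (auto; try apply prodR_pos; auto; apply exp_pos).
    unfold Rpower. rewrite ln_exp, sumR_const. fold Q. f_equal; [field|].
    apply sumR_ext. intros j Hj. destruct (Hargs j Hj).
    apply ln_div; apply Gamma_pos; lra. }
  assert (EA : K_approx n p q = sumR (fun j => K_approx_R N P (INR j + 1) - K_approx_R N P (INR j)) q).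
  { rewrite K_approx_INR, (sumR_telescope (K_approx_R N P)).
    replace (K_approx_R N P 0) with 0 by (unfold K_approx_R; field; lra). fold N P Q. ring. }
  rewrite EK, EA, <- sumR_add_sub.
  apply Rabs_sumR_le. intros j Hj.
  assert (INR j <= Q) by (apply le_INR; lia).
  assert (0 <= INR j) by apply pos_INR.
  apply (summand_bound N p C d (INR j)); fold P; try nra; lra.
Qed.

(* Since [Q^2 = O(n)], the bound [Q n * k / n] is [O(n^(-1/2))]. *)
Lemma is_lim_seq_ratio_bound (u Q : nat -> R) (k C : R) :
  0 <= C ->
  eventually (fun n => 0 <= Q n /\ Q n * Q n <= C * INR n /\ Rabs (u n) <= Q n * (k / INR n)) ->
  is_lim_seq u 0.
Proof.
  intros HC [N0 HN0]. apply is_lim_seq_spec. intros eps. assert (He := cond_pos eps).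
  destruct (INR_unbounded (k ^ 2 * C / eps ^ 2)) as [N1 HN1].
  assert (0 <= k ^ 2 * C / eps ^ 2)
    by (apply Rdiv_le_0_compat; [apply Rmult_le_pos; [apply pow2_ge_0 | lra] | Rpos]).
  exists (max N0 N1). intros n Hn.
  destruct (HN0 n ltac:(lia)) as [HQ [HQQ Hu]]. rewrite Rminus_0_r.
  assert (HnN1 : INR N1 <= INR n) by (apply le_INR; lia).
  assert (HNn : 0 < INR n) by lra.
  set (N := INR n) in *.
  assert (HX : (Q n * (k / N)) ^ 2 < eps ^ 2).
  { replace ((Q n * (k / N)) ^ 2) with (k ^ 2 * (Q n * Q n) / N ^ 2) by (field; lra).
    apply Rle_lt_trans with (k ^ 2 * C / N).
    - replace (k ^ 2 * C / N) with (k ^ 2 * (C * N) / N ^ 2) by (field; lra).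
      unfold Rdiv. apply Rmult_le_compat_r; [left; Rpos|].
      apply Rmult_le_compat_l; [apply pow2_ge_0 | auto].
    - apply Rmult_lt_reg_r with N; [lra|].
      replace (k ^ 2 * C / N * N) with (k ^ 2 * C) by (field; lra).
      apply Rmult_lt_compat_l with (r := eps ^ 2) in HN1; [|Rpos].
      replace (eps ^ 2 * (k ^ 2 * C / eps ^ 2)) with (k ^ 2 * C) in HN1 by (field; lra).
      assert (eps ^ 2 * INR N1 <= eps ^ 2 * N) by (apply Rmult_le_compat_l; [apply pow2_ge_0 | auto]).
      lra. }
  apply Rle_lt_trans with (Q n * (k / N)); [auto|].
  apply Rnot_le_lt. intros Hle. nra.
Qed.

Theorem lemma2p7 (p q : nat -> nat)
  (Hrange : exists N : nat, forall n : nat, (N <= n)%nat ->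
              (1 <= q n)%nat /\ (q n <= p n)%nat /\ (p n < n)%nat)
  (Hpinf : forall M : nat, exists N : nat, forall n : nat, (N <= n)%nat -> (M <= p n)%nat)
  (Hlimsup : exists c : R, c < 1 /\ exists N : nat, forall n : nat, (N <= n)%nat ->
              INR (p n) / INR n <= c)
  (HO : exists C : R, exists N : nat, forall n : nat, (N <= n)%nat ->
              INR (p n) * INR (q n) <= C * INR n) :
  is_lim_seq (fun n => ln (K n (p n) (q n)) - K_approx n (p n) (q n)) 0.
Proof.
  destruct Hlimsup as [c [Hc Hratio]]. destruct HO as [C0 HpqC].
  set (d := Rmin (1 - c) 1). set (C := Rmax C0 0).
  assert (Hd : 0 < d <= 1) by (split; [apply Rmin_pos | apply Rmin_r]; lra).
  assert (Hdc : d <= 1 - c) by apply Rmin_l.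
  assert (HC : 0 <= C) by apply Rmax_r.
  assert (HC0 : C0 <= C) by apply Rmax_l.
  assert (Hlarge : eventually (fun n => Rmax (16 * C / d ^ 2) (6 / d) < INR n)).
  { destruct (INR_unbounded (Rmax (16 * C / d ^ 2) (6 / d))) as [N HN].
    exists N. intros n Hn. apply le_INR in Hn. lra. }
  apply (is_lim_seq_ratio_bound _ (fun n => INR (q n)) (summand_constant d C) C HC).
  generalize (filter_and _ _ Hrange (filter_and _ _ Hratio (filter_and _ _ HpqC Hlarge))).
  apply filter_imp. intros n [[_ [Hqp _]] [Hpn [Hpq Hn]]].
  assert (H16 := Rmax_l (16 * C / d ^ 2) (6 / d)). assert (H6 := Rmax_r (16 * C / d ^ 2) (6 / d)).
  assert (HN : 0 < INR n) by (assert (0 < 6 / d) by Rpos; lra).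
  assert (HP : INR (p n) <= (1 - d) * INR n) by (apply Rle_div_l in Hpn; nra).
  assert (HQP : INR (q n) <= INR (p n)) by (apply le_INR; auto).
  assert (HQ : 0 <= INR (q n)) by apply pos_INR.
  split; [auto | split; [nra |]].
  apply ln_K_error_bound; auto; nra.
Qed.
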